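(* Each of the matroids $U_{2,5}$, $U_{3,5}$, $K$ and $K^*$ is an excluded minor for the class $\mathcal{R}$.
   Context: $\mathcal{R}$ is the class of matroids that are binary or can be obtained from a binary matroid by relaxing a circuit-hyperplane (relaxing a circuit-hyperplane $H$ of $M$ means forming the matroid on $E(M)$ whose bases are the bases of $M$ together with $H$). $K$ is the seven-element rank-2 matroid obtained from $U_{2,4}$ by adding one new element in parallel to each of three of its four elements; $K^*$ is its dual. An excluded minor for a minor-closed class is a matroid not in the class all of whose proper minors are in the class. *)

From HB Require Import structures.
From mathcomp Require Import all_boot all_order all_algebra.
Set Implicit Arguments. Unset Strict Implicit. Unset Printing Implicit Defensive.
Import GRing.Theory.

Record matroid (T : finType) := Matroid {
  ground : {set T};
  bases  : {set {set T}} }.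

Definition is_matroid (T : finType) (M : matroid T) : Prop :=
  [/\ (forall B, B \in bases M -> B \subset ground M),
      bases M != set0 &
      (forall B1 B2 x, B1 \in bases M -> B2 \in bases M -> x \in B1 :\: B2 ->
         exists2 y, y \in B2 :\: B1 & (B1 :\ x) :|: [set y] \in bases M)].

Definition indep (T : finType) (M : matroid T) (I : {set T}) : bool :=
  [exists B in bases M, I \subset B].

Definition rank (T : finType) (M : matroid T) (A : {set T}) : nat :=
  \max_(I : {set T} | (I \subset A) && indep M I) #|I|.

(* the minor M / C \ D (C contracted, D deleted); ground set E - (C u D);
   independent sets: I with r(I u C) = |I| + r(C); bases = maximal ones *)
Definition minor (T : finType) (M : matroid T) (C D : {set T}) : matroid T :=
  let E' := ground M :\: (C :|: D) in
  Matroid E'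
    [set I | maxset (fun I : {set T} =>
                (I \subset E') && (rank M (I :|: C) == #|I| + rank M C)) I].

Definition dual (T : finType) (M : matroid T) : matroid T :=
  Matroid (ground M) [set ground M :\: B | B in bases M].

(* binary = representable over GF(2): vectors v e, bases = subsets of E whose
   vectors are linearly independent and span the span of all of E *)
Definition span_rank (T : finType) n (v : T -> 'rV['F_2]_n) (S : {set T}) : nat :=
  \rank (\sum_(e in S) <<v e>>)%MS.

Definition binary (T : finType) (M : matroid T) : Prop :=
  exists n (v : T -> 'rV['F_2]_n),
    bases M = [set B : {set T} | (B \subset ground M) && (span_rank v B == #|B|)
                        && (span_rank v B == span_rank v (ground M))].

Definition is_circuit (T : finType) (M : matroid T) (X : {set T}) : bool :=
  minset (fun Y : {set T} => (Y \subset ground M) && ~~ indep M Y) X.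

Definition is_flat (T : finType) (M : matroid T) (X : {set T}) : bool :=
  (X \subset ground M) &&
  [forall e in ground M :\: X, rank M X < rank M (e |: X)].

Definition is_hyperplane (T : finType) (M : matroid T) (X : {set T}) : bool :=
  is_flat M X && (rank M X + 1 == rank M (ground M)).

Definition relax (T : finType) (M : matroid T) (H : {set T}) : matroid T :=
  Matroid (ground M) (H |: bases M).

Definition in_R (T : finType) (M : matroid T) : Prop :=
  binary M \/
  exists (N : matroid T) (H : {set T}),
    [/\ binary N, is_circuit N H, is_hyperplane N H & M = relax N H].

Definition excluded_minor_R (T : finType) (M : matroid T) : Prop :=
  [/\ is_matroid M, ~ in_R M &
      forall C D : {set T}, C :|: D \subset ground M -> [disjoint C & D] ->
        C :|: D != set0 -> in_R (minor M C D)].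

Definition U25 : matroid 'I_5 := Matroid setT [set B : {set 'I_5} | #|B| == 2].
Definition U35 : matroid 'I_5 := Matroid setT [set B : {set 'I_5} | #|B| == 3].

(* K: elements 0,1,2,3 form U_{2,4}; 4,5,6 are parallel to 0,1,2 *)
Definition K : matroid 'I_7 :=
  Matroid setT [set B : {set 'I_7} | (#|B| == 2) &&
    [forall x in B, forall y in B, (x != y) ==> (val x %% 4 != val y %% 4)]].

Definition Kstar : matroid 'I_7 := dual K.

(* All four matroids live on 'I_5 or 'I_7, so the statement is a finite check,
   carried out by reflection.  A subset of 'I_n is encoded by its mask, a
   boolean list of length n, and a matroid by the mask of its ground set and
   the list of masks of its bases. *)

From HB Require Import structures.
From mathcomp Require Import all_boot all_order all_algebra.
Set Implicit Arguments. Unset Strict Implicit. Unset Printing Implicit Defensive.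
Import GRing.Theory.

Definition zipw (f : bool -> bool -> bool) (s t : seq bool) : seq bool :=
  [seq f p.1 p.2 | p <- zip s t].

Definition diffb (a b : bool) : bool := a && ~~ b.

Definition subl : seq bool -> seq bool -> bool := all2 implb.

Definition unitl (n i : nat) : seq bool := mkseq (pred1 i) n.

Fixpoint allseqs (k : nat) : seq (seq bool) :=
  if k is k'.+1 then
    [seq false :: s | s <- allseqs k'] ++ [seq true :: s | s <- allseqs k']
  else [:: [::]].

(* Variants of [has] and [all] that stop at the first decisive element: under
   vm_compute the boolean connectives are strict, so [a x || has a s']
   would evaluate the whole list. *)
Fixpoint lazy_has (T : Type) (a : pred T) (s : seq T) : bool :=
  if s is x :: s' then (if a x then true else lazy_has a s') else false.

Fixpoint lazy_all (T : Type) (a : pred T) (s : seq T) : bool :=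
  if s is x :: s' then (if a x then lazy_all a s' else false) else true.

Lemma lazy_hasE T (a : pred T) s : lazy_has a s = has a s.
Proof. by elim: s => //= x s ->; case: (a x). Qed.

Lemma lazy_allE T (a : pred T) s : lazy_all a s = all a s.
Proof. by elim: s => //= x s ->; case: (a x). Qed.

Lemma size_zipw f s t : size s = size t -> size (zipw f s t) = size s.
Proof. by move=> e; rewrite size_map size1_zip ?e. Qed.

Lemma nth_zipw f s t i : size s = size t -> i < size s ->
  nth false (zipw f s t) i = f (nth false s i) (nth false t i).
Proof.
move=> e lt; rewrite (nth_map (false, false)); first by rewrite nth_zip.
by rewrite size1_zip // e.
Qed.

Lemma sublP s t : size s = size t ->
  reflect (forall i, nth false s i -> nth false t i) (subl s t).
Proof.
elim: s t => [|a s IH] [|b t] //= => [_|[/IH{}IH]].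
  by apply: ReflectT => i; rewrite nth_nil.
apply: (iffP andP) => [[/implyP ab /IH st] [|i] // | H]; first exact: st.
by split; [apply/implyP => /(H 0) | apply/IH => i /(H i.+1)].
Qed.

Lemma size_unitl n i : size (unitl n i) = n.
Proof. exact: size_mkseq. Qed.

Lemma nth_unitl n i j : nth false (unitl n i) j = (j < n) && (j == i).
Proof.
have [lt|ge] := ltnP j n; first by rewrite nth_mkseq.
by rewrite nth_default ?size_unitl.
Qed.

Lemma mem_allseqs k s : (s \in allseqs k) = (size s == k).
Proof.
elim: k s => [|k IH] [|b s] //=.
  by rewrite mem_cat; apply/negbTE; rewrite negb_or; apply/andP; split; apply/mapP => -[].
rewrite mem_cat eqSS -IH; apply/orP/idP => [[] /mapP [x xin [_ ->]] // | sin].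
by case: b; [right|left]; apply: map_f.
Qed.

Lemma foldr_maxn_ge (l : seq nat) x : x \in l -> x <= foldr maxn 0 l.
Proof.
elim: l => [|a l IH] //=; rewrite inE => /orP[/eqP -> | /IH h]; first exact: leq_maxl.
exact: leq_trans h (leq_maxr _ _).
Qed.

Lemma foldr_maxn_le (l : seq nat) m : {in l, forall x, x <= m} -> foldr maxn 0 l <= m.
Proof.
elim: l => [|a l IH] //= H; rewrite geq_max H ?mem_head // IH // => x xl.
by rewrite H // inE xl orbT.
Qed.

Section Masks.
Variable k : nat.
Local Notation n := k.+1.

Definition setof (s : seq bool) : {set 'I_n} := [set i : 'I_n | nth false s i].
Definition msk (A : {set 'I_n}) : seq bool := [seq i \in A | i <- enum 'I_n].

Lemma size_msk A : size (msk A) = n.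
Proof. by rewrite size_map size_enum_ord. Qed.

Lemma nth_msk A (i : 'I_n) : nth false (msk A) i = (i \in A).
Proof. by rewrite (nth_map i) ?size_enum_ord // nth_ord_enum. Qed.

Lemma setofK : cancel msk setof.
Proof. by move=> A; apply/setP => i; rewrite inE nth_msk. Qed.

Lemma msk_inj : injective msk.
Proof. exact: can_inj setofK. Qed.

Lemma eq_msk A B : (A == B) = (msk A == msk B).
Proof. exact/esym/inj_eq/msk_inj. Qed.

Lemma msk_in_allseqs A : msk A \in allseqs n.
Proof. by rewrite mem_allseqs size_msk. Qed.

Lemma msk_ext (A : {set 'I_n}) s : size s = n ->
  (forall i : 'I_n, nth false s i = (i \in A)) -> msk A = s.
Proof.
move=> sz H; apply: (eq_from_nth (x0 := false)); rewrite size_msk // => i lt.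
by rewrite -[i]/(val (Ordinal lt)) nth_msk H.
Qed.

Lemma mskK s : size s = n -> msk (setof s) = s.
Proof. by move=> sz; apply: msk_ext => // i; rewrite inE. Qed.

Lemma msk_zipw (f : bool -> bool -> bool) (A B C : {set 'I_n}) :
  (forall x, (x \in C) = f (x \in A) (x \in B)) -> msk C = zipw f (msk A) (msk B).
Proof.
move=> HC; apply: msk_ext => [|i]; first by rewrite size_zipw !size_msk.
by rewrite nth_zipw ?size_msk // !nth_msk HC.
Qed.

Lemma msk_setU A B : msk (A :|: B) = zipw orb (msk A) (msk B).
Proof. by apply: msk_zipw => x; rewrite inE. Qed.

Lemma msk_setD A B : msk (A :\: B) = zipw diffb (msk A) (msk B).
Proof. by apply: msk_zipw => x; rewrite inE andbC. Qed.

Lemma msk_setC A : msk (~: A) = map negb (msk A).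
Proof.
apply: msk_ext => [|i]; first by rewrite size_map size_msk.
by rewrite (nth_map false) ?size_msk // nth_msk inE.
Qed.

Lemma msk_set1 (x : 'I_n) : msk [set x] = unitl n x.
Proof. by apply: msk_ext => [|i]; rewrite ?size_unitl // nth_unitl inE ltn_ord. Qed.

Lemma msk_setT : msk setT = nseq n true.
Proof. by apply: msk_ext => [|i]; rewrite ?size_nseq // nth_nseq ltn_ord inE. Qed.

Lemma msk_set0 : msk set0 = nseq n false.
Proof. by apply: msk_ext => [|i]; rewrite ?size_nseq // nth_nseq ltn_ord inE. Qed.

Lemma card_msk (A : {set 'I_n}) : #|A| = count id (msk A).
Proof. by rewrite count_map enumT -size_filter cardE /enum_mem. Qed.

Lemma subset_msk (A B : {set 'I_n}) : (A \subset B) = subl (msk A) (msk B).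
Proof.
have szAB : size (msk A) = size (msk B) by rewrite !size_msk.
apply/subsetP/(sublP szAB) => [H i | H x].
  case: (ltnP i n) => lt; last by rewrite nth_default ?size_msk.
  by rewrite -[i]/(val (Ordinal lt)) !nth_msk; apply: H.
by rewrite -!nth_msk; apply: H.
Qed.

End Masks.

Section Presentations.
Variable k : nat.
Local Notation n := k.+1.
Local Notation setof := (@setof k).

Definition presents (M : matroid 'I_n) (g : seq bool) (BL : seq (seq bool)) :=
  [/\ ground M = setof g, size g = n, all (fun s => size s == n) BL &
      forall B, (B \in bases M) = (msk B \in BL)].

Definition indepb (BL : seq (seq bool)) (s : seq bool) : bool := has (subl s) BL.

Definition rankb (BL : seq (seq bool)) (a : seq bool) : nat :=
  foldr maxn 0 [seq count id s | s <- allseqs n & subl s a && indepb BL s].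

Definition circuitb (g : seq bool) (BL : seq (seq bool)) (x : seq bool) : bool :=
  let dep y := subl y g && ~~ indepb BL y in
  dep x && all (fun y => dep y ==> subl y x ==> (y == x)) (allseqs n).

Definition hyperplaneb (g : seq bool) (BL : seq (seq bool)) (x : seq bool) : bool :=
  let rx := rankb BL x in
  [&& subl x g,
      all (fun i => nth false g i && ~~ nth false x i ==>
                    (rx < rankb BL (zipw orb (unitl n i) x))) (iota 0 n) &
      rx + 1 == rankb BL g].

Definition basis_axiomsb (g : seq bool) (BL : seq (seq bool)) : bool :=
  [&& all (subl^~ g) BL, BL != [::] &
      all (fun b1 => all (fun b2 => all (fun i =>
        nth false b1 i && ~~ nth false b2 i ==>
        has (fun j => [&& nth false b2 j, ~~ nth false b1 j &
               zipw orb (zipw diffb b1 (unitl n i)) (unitl n j) \in BL])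
          (iota 0 n)) (iota 0 n)) BL) BL].

Section Presented.
Variables (M : matroid 'I_n) (g : seq bool) (BL : seq (seq bool)).
Hypothesis MgBL : presents M g BL.

Lemma indepE I : indep M I = indepb BL (msk I).
Proof.
have [_ _ /allP szBL Hb] := MgBL.
apply/existsP/hasP => [[B /andP[Bin sIB]] | [s sin sIs]].
  by exists (msk B); rewrite -?Hb // -subset_msk.
have sz : size s = n by apply/eqP/szBL.
by exists (setof s); rewrite Hb mskK // sin subset_msk mskK.
Qed.

Lemma rankE A : rank M A = rankb BL (msk A).
Proof.
apply/eqP; rewrite eqn_leq; apply/andP; split.
  apply/bigmax_leqP => I /andP[sIA iI]; rewrite card_msk; apply: foldr_maxn_ge.
  apply: map_f; rewrite mem_filter msk_in_allseqs andbT -subset_msk sIA /=.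
  by rewrite -indepE.
apply: foldr_maxn_le => x /mapP [s]; rewrite mem_filter mem_allseqs.
case/andP => /andP[sA iS] /eqP sz ->.
rewrite -(mskK sz) -card_msk; apply: leq_bigmax_cond.
by rewrite subset_msk indepE mskK // sA.
Qed.

Lemma dependentE (Y : {set 'I_n}) : (Y \subset ground M) && ~~ indep M Y =
  subl (msk Y) g && ~~ indepb BL (msk Y).
Proof. by have [gM szg _ _] := MgBL; rewrite gM subset_msk mskK // indepE. Qed.

Lemma circuitb_sound X : circuitb g BL (msk X) -> is_circuit M X.
Proof.
case/andP => dX /allP Hmin; apply/minsetP; split; first by rewrite dependentE.
move=> Y dY sYX; apply/eqP; rewrite eq_msk.
have /implyP := Hmin _ (msk_in_allseqs Y); rewrite -dependentE dY => /(_ isT).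
by move/implyP; apply; rewrite -subset_msk.
Qed.

Lemma hyperplaneb_sound X : hyperplaneb g BL (msk X) -> is_hyperplane M X.
Proof.
have [gM szg _ _] := MgBL.
case/and3P => sXg /allP Hflat Hr; apply/andP; split; last by rewrite !rankE gM mskK.
apply/andP; split; first by rewrite gM subset_msk mskK.
apply/forallP => e; apply/implyP; rewrite gM !inE => /andP[eX eg].
rewrite !rankE msk_setU msk_set1.
have := Hflat e; rewrite mem_iota ltn_ord => /(_ isT)/implyP; apply.
by rewrite nth_msk eX eg.
Qed.

Lemma basis_axiomsb_sound : basis_axiomsb g BL -> is_matroid M.
Proof.
have [gM szg /allP szBL Hb] := MgBL.
case/and3P => /allP Hsub BLne /allP Hex; split.
- by move=> B; rewrite Hb gM subset_msk mskK //; apply: Hsub.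
- case: BL BLne szBL Hb {Hsub Hex} => [|s BL'] // _ szBL Hb.
  apply/set0Pn; exists (setof s); rewrite Hb mskK ?mem_head //.
  exact/eqP/szBL/mem_head.
move=> B1 B2 x; rewrite !Hb => B1in B2in; rewrite inE => /andP[xB2 xB1].
have /allP/(_ _ B2in)/allP := Hex _ B1in.
move/(_ x); rewrite mem_iota ltn_ord !nth_msk xB1 xB2 => /(_ isT)/hasP [j].
rewrite mem_iota add0n => /andP[_ jn]; rewrite -[j]/(val (Ordinal jn)) !nth_msk.
case/and3P => jB2 jB1 jin; exists (Ordinal jn); first by rewrite inE jB2 jB1.
by rewrite Hb msk_setU msk_setD !msk_set1.
Qed.

End Presented.

(* Ranks of all subsets, tabulated once so that every minor reuses them. *)
Definition rank_table (BL : seq (seq bool)) : seq nat := map (rankb BL) (allseqs n).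
Definition rank_lookup (T : seq nat) (s : seq bool) : nat :=
  nth 0 T (index s (allseqs n)).

Lemma rank_lookupE BL s : size s = n -> rank_lookup (rank_table BL) s = rankb BL s.
Proof.
move=> sz; have sin : s \in allseqs n by rewrite mem_allseqs sz.
by rewrite /rank_lookup (nth_map [::]) ?nth_index ?index_mem.
Qed.

Definition maximals (L : seq (seq bool)) : seq (seq bool) :=
  [seq s <- L | all (fun t => subl s t ==> (t == s)) L].

Definition minor_groundb (g c d : seq bool) : seq bool := zipw diffb g (zipw orb c d).

Definition minor_basesb (rk : seq bool -> nat) (g c d : seq bool) : seq (seq bool) :=
  let e' := minor_groundb g c d in
  let rc := rk c in
  maximals [seq s <- allseqs n | if subl s e' then rk (zipw orb s c) == count id s + rc
                                 else false].

Lemma minor_presents M g BL rk c d : presents M g BL ->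
  (forall A, rank M A = rk (msk A)) -> size c = n -> size d = n ->
  presents (minor M (setof c) (setof d)) (minor_groundb g c d) (minor_basesb rk g c d).
Proof.
move=> MgBL rkM szc szd; have [gM szg _ _] := MgBL.
have groundE : ground M :\: (setof c :|: setof d) = setof (minor_groundb g c d).
  by rewrite -[LHS]setofK msk_setD msk_setU gM !mskK.
have szm : size (minor_groundb g c d) = n.
  by rewrite !size_zipw ?size_zipw ?szg ?szc ?szd.
split => //.
  apply/allP => s; rewrite mem_filter mem_filter mem_allseqs.
  by case/andP => _ /andP[_ ->].
move=> B; rewrite /minor /= inE groundE.
set P := fun I : {set 'I_n} => _.
pose p s := if subl s (minor_groundb g c d) then rk (zipw orb s c) == count id s + rk c
             else false.
have PE I : P I = p (msk I).
  by rewrite /P /p subset_msk mskK // !rkM msk_setU mskK // card_msk; case: ifP.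
rewrite /minor_basesb; cbv zeta.
rewrite /maximals -/p mem_filter mem_filter msk_in_allseqs andbT andbC.
apply/maxsetP/andP => [[PB Bmax] | [pB /allP Bmax]].
  split; first by rewrite -PE.
  apply/allP => t; rewrite mem_filter mem_allseqs => /andP[pt /eqP szt].
  apply/implyP => sBt; rewrite -(mskK szt) -eq_msk; apply/eqP.
  by apply: Bmax; rewrite ?PE ?mskK // subset_msk mskK.
split; first by rewrite PE.
move=> B' PB' sBB'; apply/eqP; rewrite eq_msk.
have := Bmax (msk B'); rewrite mem_filter msk_in_allseqs -PE PB' /=.
by move/(_ isT)/implyP; apply; rewrite -subset_msk.
Qed.

End Presentations.

Section GF2Linear.
Local Open Scope ring_scope.

Lemma F2_cases (a : 'F_2) : a = 0 \/ a = 1.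
Proof. by case: a => [[|[|m]]] //= H; [left|right]; apply/val_inj. Qed.

Lemma F2_natb (b : bool) : ((b%:R : 'F_2) == 1) = b.
Proof. by case: b; rewrite //= eq_sym oner_eq0. Qed.

Lemma F2_eq1 (a : 'F_2) : (a == 1)%:R = a.
Proof. by case: (F2_cases a) => ->; rewrite ?eqxx // eq_sym oner_eq0. Qed.

Lemma F2_addb (a b : bool) : (addb a b)%:R = a%:R + b%:R :> 'F_2.
Proof.
have F2_11 : 1 + 1 = 0 :> 'F_2 by apply/val_inj.
by case: a; case: b; rewrite /= ?addr0 ?add0r ?F2_11.
Qed.

Lemma mxrank_adds_row (F : fieldType) m p (v : 'rV[F]_p) (S : 'M[F]_(m, p)) :
  ~~ (v <= S)%MS -> \rank (<<v>> + S)%MS = (\rank S).+1.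
Proof.
move=> vS; apply/eqP; rewrite eqn_leq; apply/andP; split.
  rewrite -[(\rank S).+1]add1n; apply: leq_trans (mxrank_adds_leqif _ _).1 _.
  by rewrite leq_add2r mxrank_gen rank_leq_row.
apply: rank_ltmx; rewrite ltmxE addsmxSr /=; apply: contra vS => sub.
by apply: submx_trans sub; rewrite -genmxE addsmxSl.
Qed.

(* Over GF(2) the only multiples of [v] are 0 and [v]. *)
Lemma sub_adds_rowF2 r m (v x : 'rV['F_2]_r) (S : 'M_(m, r)) :
  (x <= <<v>> + S)%MS <-> (x <= S)%MS \/ exists2 y, (y <= S)%MS & x = v + y.
Proof.
have eqa : (<<v>> + S :=: v + S)%MS := adds_eqmx (genmxE _) (eqmx_refl _).
rewrite eqa; split => [|[xS | [y yS ->]]].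
- case/sub_addsmxP => [[c z]] /= ->; rewrite [c]mx11_scalar mul_scalar_mx.
  have zS : (z *m S <= S)%MS by exact: submxMl.
  case: (F2_cases (c 0 0)) => ->; rewrite ?scale0r ?scale1r ?add0r; first by left.
  by right; exists (z *m S).
- exact: submx_trans xS (addsmxSr _ _).
- by apply: addmx_sub; [exact: addsmxSl | exact: submx_trans yS (addsmxSr _ _)].
Qed.

End GF2Linear.

Section SpanEnumeration.
Variable r : nat.
Local Open Scope ring_scope.

Definition vec (s : seq bool) : 'rV['F_2]_r := \row_(j < r) (nth false s j)%:R.

Lemma vec_addb s t : size s = r -> size t = r -> vec (zipw addb s t) = vec s + vec t.
Proof.
move=> ss st; apply/rowP => j.
by rewrite !mxE nth_zipw ?F2_addb ?ss ?st ?ltn_ord.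
Qed.

Lemma vec_inj s t : size s = r -> size t = r -> vec s = vec t -> s = t.
Proof.
move=> ss st e; apply: (eq_from_nth (x0 := false)); rewrite ss ?st // => i lt.
have := congr1 (fun x : 'rV['F_2]_r => x 0 (Ordinal lt) == 1) e.
by rewrite !mxE /= !F2_natb.
Qed.

Lemma vec0 : vec (nseq r false) = 0.
Proof. by apply/rowP => j; rewrite !mxE nth_nseq if_same. Qed.

Definition span_of (L : seq (seq bool)) : 'M['F_2]_r := (\sum_(u <- L) <<vec u>>)%MS.

Fixpoint span_enum (L : seq (seq bool)) : nat * seq (seq bool) :=
  if L is u :: L' then
    let (d, sp) := span_enum L' in
    if u \in sp then (d, sp) else (d.+1, sp ++ map (zipw addb u) sp)
  else (0%N, [:: nseq r false]).

Definition span_dim (L : seq (seq bool)) : nat := (span_enum L).1.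

Lemma size_span_enum L : all (fun u => size u == r) L ->
  all (fun w => size w == r) (span_enum L).2.
Proof.
elim: L => [|u L' IH] /=; first by rewrite size_nseq eqxx.
case/andP => /eqP szu /IH; case: (span_enum L') => d sp /= /allP szsp.
case: ifP => _; first exact/allP.
apply/allP => w; rewrite mem_cat => /orP[/szsp // | /mapP[w' /szsp/eqP szw' ->]].
by rewrite size_zipw szu ?szw'.
Qed.

Lemma span_enumP L x : all (fun u => size u == r) L ->
  (x <= span_of L)%MS <-> exists2 w, w \in (span_enum L).2 & x = vec w.
Proof.
elim: L x => [|u L' IH] x /= => [_|/andP[/eqP szu szL']].
  rewrite /span_of big_nil submx0; split => [/eqP ->|[w]].
    by exists (nseq r false); rewrite ?mem_head ?vec0.
  by rewrite inE => /eqP -> ->; rewrite vec0.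
have /allP szsp := size_span_enum szL'; move: {IH}(IH ^~ szL') szsp.
rewrite /span_of big_cons; case: (span_enum L') => d sp /= IH szsp.
case: ifP => usp.
  by rewrite (addsmx_idPr _) //; rewrite genmxE; apply/IH; exists u.
apply: (iff_trans (sub_adds_rowF2 _ _ _)).
split => [[/IH [w wsp ->] | [y /IH [w wsp ->] ->]] | [w]].
- by exists w; rewrite // mem_cat wsp.
- exists (zipw addb u w); first by rewrite mem_cat map_f ?orbT.
  by rewrite vec_addb ?szu //; apply/eqP/szsp.
rewrite mem_cat => /orP[wsp ->|/mapP[w' w'sp ->] ->]; first by left; apply/IH; exists w.
right; exists (vec w'); first by apply/IH; exists w'.
by rewrite vec_addb ?szu //; apply/eqP/szsp.
Qed.

Lemma span_dimE L : all (fun u => size u == r) L -> span_dim L = \rank (span_of L).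
Proof.
rewrite /span_dim; elim: L => [|u L' IH] /=; first by rewrite /span_of big_nil mxrank0.
case/andP => /eqP szu szL'; have memP x := span_enumP x szL'.
have /allP szsp := size_span_enum szL'.
move: (IH szL') szsp memP; rewrite /span_of big_cons.
case: (span_enum L') => d sp /= -> szsp memP.
case: ifP => usp.
  by rewrite (addsmx_idPr _) // genmxE; apply/memP; exists u.
rewrite mxrank_adds_row //; apply/negP => /memP [w wsp /vec_inj eq_uw].
by move: usp; rewrite eq_uw ?wsp //; apply/eqP/szsp.
Qed.

End SpanEnumeration.

Section Codes.
Variables (k r : nat).
Local Notation n := k.+1.

Definition codes_of (cds : seq (seq bool)) (s : seq bool) : seq (seq bool) :=
  [seq nth [::] cds i | i <- iota 0 n & nth false s i].

Lemma span_rank_codes cds (S : {set 'I_n}) :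
  size cds = n -> all (fun c => size c == r) cds ->
  span_rank (fun e : 'I_n => vec r (nth [::] cds e)) S = span_dim r (codes_of cds (msk S)).
Proof.
move=> szc /allP Hc; rewrite span_dimE; last first.
  apply/allP => u /mapP [i]; rewrite mem_filter mem_iota => /andP[_ /andP[_ lt]] ->.
  by apply: Hc; rewrite mem_nth // szc.
rewrite /span_rank /span_of /codes_of big_map big_filter.
rewrite (eq_bigl (fun e : 'I_n => nth false (msk S) e)) => [|e]; last by rewrite nth_msk.
rewrite -(big_mkord (fun i => nth false (msk S) i) (fun i => <<vec r (nth [::] cds i)>>)%MS).
by rewrite /index_iota subn0.
Qed.
End Codes.

Lemma span_rank_coords (T : finType) r m (x : T -> 'rV['F_2]_r) (v : T -> 'rV['F_2]_m)
    (Phi : 'M_(r, m)) :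
  row_free Phi -> (forall e, v e = x e *m Phi)%R -> forall S, span_rank v S = span_rank x S.
Proof.
move=> Phi_free vE S; rewrite /span_rank -[RHS](mxrankMfree _ Phi_free).
rewrite (sumsmxMr_gen _ _ _).1; apply: (eqmx_sums _).1 => e _.
apply: eqmx_trans (genmxE _) _; apply: eqmx_sym; apply: eqmx_trans (genmxE _) _.
by rewrite vE; apply: eqmxMr; apply: genmxE.
Qed.

Section BinaryCertificates.
Variable k : nat.
Local Notation n := k.+1.
Local Notation setof := (@setof k).

Definition binary_basisb r (cds : seq (seq bool)) (g s : seq bool) : bool :=
  let d := span_dim r (codes_of k cds s) in
  subl s g && (d == count id s) && (d == span_dim r (codes_of k cds g)).

Definition representsb r (cds : seq (seq bool)) (g : seq bool) (BL : seq (seq bool)) :=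
  [&& size cds == n, all (fun c => size c == r) cds &
      all (fun s => (s \in BL) == binary_basisb r cds g s) (allseqs n)].

Lemma representsb_binary (M : matroid 'I_n) g BL r cds :
  presents M g BL -> representsb r cds g BL -> binary M.
Proof.
case=> gM szg _ Hb /and3P[/eqP szc szcds /allP Hall].
exists r, (fun e : 'I_n => vec r (nth [::] cds e)); apply/setP => B.
rewrite inE Hb gM subset_msk mskK // !span_rank_codes // mskK // card_msk.
exact/eqP/Hall/msk_in_allseqs.
Qed.

Definition positions (b : seq bool) : seq nat := [seq i <- iota 0 n | nth false b i].

(* The standard representation relative to a basis [b0]: the [j]-th element
   of [b0] is the [j]-th unit vector, and an element [i] outside [b0] has
   [j]-th coordinate 1 iff exchanging the [j]-th element of [b0] for [i] gives
   a basis (i.e. the fundamental circuit of [i] meets that element). *)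
Definition fundamental_codes (g : seq bool) (BL : seq (seq bool)) (b0 : seq bool) :=
  let bl := positions b0 in
  [seq if nth false b0 i then unitl (size bl) (index i bl)
       else if nth false g i then
         [seq zipw orb (zipw diffb b0 (unitl n (nth 0 bl j))) (unitl n i) \in BL
         | j <- iota 0 (size bl)]
       else nseq (size bl) false
  | i <- iota 0 n].

Definition binaryb (g : seq bool) (BL : seq (seq bool)) : bool :=
  if BL is b0 :: _ then representsb (size (positions b0)) (fundamental_codes g BL b0) g BL
  else false.

Lemma binaryb_sound (M : matroid 'I_n) g BL :
  presents M g BL -> binaryb g BL -> binary M.
Proof. by case: BL => [|b0 BL] // MgBL; apply: representsb_binary MgBL. Qed.

End BinaryCertificates.

Fixpoint prod_lists (L : seq (seq (seq bool))) : seq (seq (seq bool)) :=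
  if L is c :: L' then [seq x :: a | x <- c, a <- prod_lists L'] else [:: [::]].

Lemma mem_prod_lists L cds : size cds = size L ->
  (forall i, i < size L -> nth [::] cds i \in nth [::] L i) -> cds \in prod_lists L.
Proof.
elim: L cds => [|c L IH] [|x a] //= [sz] H.
by apply: allpairs_f; [exact: (H 0) | apply: IH => // i lt; apply: (H i.+1)].
Qed.

Section Refutation.
Variable k : nat.
Local Notation n := k.+1.
Local Notation setof := (@setof k).

Lemma setof_full : setof (nseq n true) = setT.
Proof. by apply/setP => i; rewrite !inE nth_nseq ltn_ord. Qed.

Definition candidates (b0 : seq bool) (i : nat) : seq (seq bool) :=
  let bl := positions k b0 in
  if nth false b0 i then [:: unitl (size bl) (index i bl)] else allseqs (size bl).

(* Every candidate standard representation relative to the first basis [b0]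
   gets some set wrong; a wrong set is searched first among the bases. *)
Definition not_binaryb (BL : seq (seq bool)) : bool :=
  if BL is b0 :: _ then
    lazy_all (fun cds => lazy_has (fun s => (s \in BL) !=
                          binary_basisb k (size (positions k b0)) cds (nseq n true) s)
                        (BL ++ allseqs n))
        (prod_lists [seq candidates b0 i | i <- iota 0 n])
  else false.

(* A binary representation [v] in which [b0] is a basis is rewritten in the
   coordinates of the basis vectors [v e], e in [b0]. *)
Section StandardForm.
Variables (m : nat) (v : 'I_n -> 'rV['F_2]_m) (b0 : seq bool).
Let blo : seq 'I_n := [seq i <- enum 'I_n | nth false b0 (val i)].
Local Notation r := (size (positions k b0)).

Lemma map_val_blo : map val blo = positions k b0.
Proof. by rewrite /positions -val_enum_ord filter_map. Qed.

Lemma size_blo : size blo = r.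
Proof. by rewrite -map_val_blo size_map. Qed.

Lemma card_setof_positions : #|setof b0| = r.
Proof.
rewrite -size_blo cardE /enum_mem -enumT; congr size; apply: eq_filter => i.
by rewrite /= inE.
Qed.

Hypotheses (rank_b0 : span_rank v (setof b0) = r) (rank_full : span_rank v setT = r).

Definition basis_mx : 'M['F_2]_(r, m) := \matrix_(j < r) v (nth ord0 blo j).

Lemma row_basis_mx (j : 'I_r) : row j basis_mx = v (nth ord0 blo j).
Proof. exact: rowK. Qed.

Lemma basis_mxE : (basis_mx :=: \sum_(e in setof b0) <<v e>>)%MS.
Proof.
apply/eqmxP/andP; split.
  apply/row_subP => j; rewrite row_basis_mx (sumsmx_sup (nth ord0 blo j)) ?genmxE //.
  have : nth ord0 blo j \in blo by rewrite mem_nth // size_blo.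
  by rewrite mem_filter inE => /andP[].
apply/sumsmx_subP => e; rewrite inE => eb; rewrite genmxE.
have eblo : e \in blo by rewrite mem_filter eb mem_enum.
have lt : index e blo < r by rewrite -size_blo index_mem.
by rewrite -(nth_index ord0 eblo) -(row_basis_mx (Ordinal lt)) row_sub.
Qed.

Lemma basis_mx_free : row_free basis_mx.
Proof. by rewrite /row_free basis_mxE.1; apply/eqP. Qed.

(* Since [b0] has full rank, every vector lies in the row space of the basis. *)
Lemma sub_basis_mx e : (v e <= basis_mx)%MS.
Proof.
have sub0T : (\sum_(e in setof b0) <<v e>> <= \sum_(e in [set: 'I_n]) <<v e>>)%MS.
  by apply/sumsmx_subP => i _; rewrite (sumsmx_sup i) ?inE.
have [_ eqc] := mxrank_leqif_sup sub0T.
have subT0 : (\sum_(e in [set: 'I_n]) <<v e>> <= \sum_(e in setof b0) <<v e>>)%MS.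
  by rewrite -eqc; apply/eqP; move: rank_b0 rank_full; rewrite /span_rank => -> ->.
rewrite basis_mxE; apply: submx_trans subT0.
by rewrite (sumsmx_sup e) ?inE ?genmxE.
Qed.

Definition coords (e : 'I_n) : 'rV['F_2]_r := (v e *m pinvmx basis_mx)%R.

Lemma coordsE e : v e = (coords e *m basis_mx)%R.
Proof. by rewrite mulmxKpV // sub_basis_mx. Qed.

Definition code (e : 'I_n) : seq bool := [seq coords e ord0 j == 1%R | j <- enum 'I_r].

Lemma vec_code e : vec r (code e) = coords e.
Proof.
by apply/rowP => j; rewrite mxE (nth_map j) ?size_enum_ord // nth_ord_enum F2_eq1.
Qed.

Definition standard_codes : seq (seq bool) := [seq code e | e <- enum 'I_n].

Lemma nth_standard_codes (e : 'I_n) : nth [::] standard_codes e = code e.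
Proof. by rewrite (nth_map ord0) ?size_enum_ord // nth_ord_enum. Qed.

Lemma size_standard_codes : size standard_codes = n.
Proof. by rewrite size_map size_enum_ord. Qed.

Lemma standard_codes_sizes : all (fun c => size c == r) standard_codes.
Proof. by apply/allP => c /mapP [i _ ->]; rewrite size_map size_enum_ord. Qed.

Lemma span_rank_standard S : span_rank v S = span_dim r (codes_of k standard_codes (msk S)).
Proof.
rewrite -span_rank_codes ?size_standard_codes ?standard_codes_sizes //.
apply: (span_rank_coords basis_mx_free) => e.
by rewrite nth_standard_codes vec_code coordsE.
Qed.

Lemma code_basis i : i < n -> nth false b0 i ->
  nth [::] standard_codes i = unitl r (index i (positions k b0)).
Proof.
move=> lt bi; set io := Ordinal lt.
have ioin : io \in blo by rewrite mem_filter bi mem_enum.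
have jlt : index io blo < r by rewrite -size_blo index_mem.
have -> : index i (positions k b0) = index io blo.
  by rewrite -map_val_blo -[i]/(val io) (index_map val_inj).
have coords_io : coords io = delta_mx ord0 (Ordinal jlt).
  apply: (row_free_inj basis_mx_free); rewrite /= -coordsE -rowE row_basis_mx /=.
  by rewrite nth_index.
rewrite -[i]/(val io) nth_standard_codes /code coords_io.
apply: (eq_from_nth (x0 := false)); first by rewrite size_map size_enum_ord size_unitl.
move=> t; rewrite size_map size_enum_ord => tlt.
rewrite (nth_map (Ordinal jlt)) ?size_enum_ord // nth_unitl tlt mxE /=.
by rewrite -[t]/(val (Ordinal tlt)) nth_ord_enum F2_natb.
Qed.

Lemma standard_codes_candidate :
  standard_codes \in prod_lists [seq candidates b0 i | i <- iota 0 n].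
Proof.
apply: mem_prod_lists; first by rewrite size_standard_codes size_map size_iota.
move=> i; rewrite size_map size_iota => lt.
rewrite (nth_map 0) ?size_iota // nth_iota // add0n /candidates.
case: ifP => bi; first by rewrite code_basis ?mem_head.
by rewrite -[i]/(val (Ordinal lt)) nth_standard_codes mem_allseqs size_map size_enum_ord.
Qed.

End StandardForm.

Lemma not_binaryb_sound (N : matroid 'I_n) BL :
  presents N (nseq n true) BL -> not_binaryb BL -> ~ binary N.
Proof.
case; rewrite setof_full => gN _ /allP szBL Hb + [m [v basesN]].
case: BL szBL Hb => [|b0 BL'] // szBL Hb.
have b0_basis : setof b0 \in bases N.
  by rewrite Hb mskK ?mem_head //; apply/eqP/szBL/mem_head.
move: b0_basis; rewrite basesN inE gN => /andP[/andP[_ /eqP rank_b0] /eqP rank_full].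
rewrite card_setof_positions in rank_b0; rewrite rank_b0 in rank_full.
rewrite /not_binaryb; cbv beta iota; rewrite lazy_allE => /allP.
move/(_ _ (standard_codes_candidate rank_b0 (esym rank_full))); rewrite lazy_hasE.
case/hasP => s sin.
have szs : size s = n by move: sin; rewrite mem_cat mem_allseqs => /orP[/szBL|] /eqP.
rewrite -(mskK szs) -Hb basesN inE gN /binary_basisb mskK // subsetT.
have -> : subl s (nseq n true) by rewrite -msk_setT -(mskK szs) -subset_msk subsetT.
rewrite !(span_rank_standard rank_b0 (esym rank_full)) mskK // msk_setT card_msk.
by rewrite mskK // eqxx.
Qed.

End Refutation.

Section ClassR.
Variable k : nat.
Local Notation n := k.+1.
Local Notation setof := (@setof k).

Definition unrelax (BL : seq (seq bool)) (h : seq bool) : seq (seq bool) :=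
  filter (predC1 h) BL.

Lemma presents_unrelax (M : matroid 'I_n) g BL h : presents M g BL ->
  presents (Matroid (setof g) [set B | msk B \in unrelax BL h]) g (unrelax BL h).
Proof.
case=> _ szg /allP szBL _; split => // [|B]; last by rewrite inE.
by apply/allP => s; rewrite mem_filter => /andP[_ /szBL].
Qed.

(* Conditionals are
   used instead of [||] and [&&] to keep the evaluation lazy. *)
Definition in_Rb (g : seq bool) (BL : seq (seq bool)) : bool :=
  if binaryb k g BL then true else
  lazy_has (fun h => let BLN := unrelax BL h in
              if binaryb k g BLN then circuitb k g BLN h && hyperplaneb k g BLN h
              else false) BL.

(* The unrelaxed table is the binary matroid [N] with circuit-hyperplane [h]
   whose relaxation is [M]. *)
Lemma in_Rb_sound (M : matroid 'I_n) g BL : presents M g BL -> in_Rb g BL -> in_R M.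
Proof.
move=> MgBL; rewrite /in_Rb lazy_hasE.
case: ifP => [/(binaryb_sound MgBL) bM _|_]; first by left.
case/hasP => h hBL; case: ifP => // bN /andP[cN hN].
have [gM szg /allP szBL Hb] := MgBL; have szh : size h = n by apply/eqP/szBL.
have NgBL := presents_unrelax h MgBL.
right; exists (Matroid (setof g) [set B | msk B \in unrelax BL h]), (setof h); split.
- exact: binaryb_sound NgBL bN.
- by apply: (circuitb_sound NgBL); rewrite mskK.
- by apply: (hyperplaneb_sound NgBL); rewrite mskK.
case: M MgBL gM Hb => E bs _ /= -> Hb; rewrite /relax; congr Matroid.
apply/setP => B; rewrite Hb !inE mem_filter /= eq_msk mskK //.
by case: eqP => // ->.
Qed.

Definition not_in_Rb (BL : seq (seq bool)) : bool :=
  not_binaryb k BL && all (fun h => not_binaryb k (unrelax BL h)) BL.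

(* If [M] relaxes [N] at [H], the bases of [N] are those of [M], possibly
   without [H]; both tables are refuted to be binary. *)
Lemma not_in_Rb_sound (M : matroid 'I_n) BL :
  presents M (nseq n true) BL -> not_in_Rb BL -> ~ in_R M.
Proof.
move=> MgBL /andP[nb /allP nbh] [/(not_binaryb_sound MgBL nb) // | [N [H [bN _ _ eM]]]].
have [_ _ /allP szBL Hb] := MgBL.
have HM : H \in bases M by rewrite eM setU11.
case: (boolP (H \in bases N)) => HN.
  apply: (not_binaryb_sound _ nb bN); move: MgBL; rewrite eM /relax.
  by rewrite (setUidPr _) // sub1set.
apply: (not_binaryb_sound _ (nbh (msk H) _) bN); last by rewrite -Hb.
have [gM szg _ _] := MgBL; split => //; first by rewrite -gM eM.
  by apply/allP => s; rewrite mem_filter => /andP[_ /szBL].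
move=> B; rewrite mem_filter /= -Hb -eq_msk eM !inE.
by case: eqP => [->|]; rewrite ?(negbTE HN).
Qed.

Definition proper_minorb (g c d : seq bool) : bool :=
  [&& subl (zipw orb c d) g, zipw andb c d == nseq n false &
      zipw orb c d != nseq n false].

Definition minors_in_Rb (g : seq bool) (BL : seq (seq bool)) : bool :=
  let T := rank_table k BL in
  all (fun c => all (fun d =>
         if proper_minorb g c d then
           in_Rb (minor_groundb g c d) (minor_basesb k (rank_lookup k T) g c d)
         else true) (allseqs n)) (allseqs n).

Lemma minors_in_Rb_sound (M : matroid 'I_n) g BL :
  presents M g BL -> minors_in_Rb g BL ->
  forall C D : {set 'I_n}, C :|: D \subset ground M -> [disjoint C & D] ->
    C :|: D != set0 -> in_R (minor M C D).
Proof.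
move=> MgBL /allP minorsR C D sCD dCD nCD; have [gM szg _ _] := MgBL.
have msk_setI : msk (C :&: D) = zipw andb (msk C) (msk D).
  by apply: msk_zipw => x; rewrite inE.
have proper : proper_minorb g (msk C) (msk D).
  rewrite /proper_minorb -msk_setU -msk_setI -msk_set0 -!eq_msk -(mskK szg) -subset_msk.
  by rewrite -gM sCD setI_eq0 dCD nCD.
have /allP/(_ _ (msk_in_allseqs D)) := minorsR _ (msk_in_allseqs C).
rewrite proper => /in_Rb_sound; apply; rewrite -{1}(setofK C) -{1}(setofK D).
apply: (minor_presents MgBL); rewrite ?size_msk // => A.
by rewrite rank_lookupE ?size_msk // (rankE MgBL).
Qed.

Definition excluded_minorb (BL : seq (seq bool)) : bool :=
  [&& all (fun s => size s == n) BL, basis_axiomsb k (nseq n true) BL,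
      not_in_Rb BL & minors_in_Rb (nseq n true) BL].

Lemma excluded_minorb_sound (M : matroid 'I_n) (BL : seq (seq bool)) :
  ground M = setT ->
  (forall B, (B \in bases M) = (msk B \in BL)) -> excluded_minorb BL -> excluded_minor_R M.
Proof.
move=> gM Hb /and4P[sz ax nR mR].
have MgBL : presents M (nseq n true) BL by split; rewrite ?size_nseq ?setof_full.
split; [exact: basis_axiomsb_sound MgBL ax | exact: not_in_Rb_sound MgBL nR |].
exact: minors_in_Rb_sound MgBL mR.
Qed.

End ClassR.

Definition U25_table : seq (seq bool) := [seq s <- allseqs 5 | count id s == 2].
Definition U35_table : seq (seq bool) := [seq s <- allseqs 5 | count id s == 3].

Definition nonparallelb (s : seq bool) : bool :=
  all (fun i => all (fun j =>
         nth false s i ==> nth false s j ==> (i != j) ==> (i %% 4 != j %% 4))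
       (iota 0 7)) (iota 0 7).

Definition K_table : seq (seq bool) :=
  [seq s <- allseqs 7 | (count id s == 2) && nonparallelb s].
Definition Kstar_table : seq (seq bool) := map (map negb) K_table.

Lemma U25_bases B : (B \in bases U25) = (msk B \in U25_table).
Proof. by rewrite inE mem_filter msk_in_allseqs card_msk andbT. Qed.

Lemma U35_bases B : (B \in bases U35) = (msk B \in U35_table).
Proof. by rewrite inE mem_filter msk_in_allseqs card_msk andbT. Qed.

Lemma K_bases B : (B \in bases K) = (msk B \in K_table).
Proof.
rewrite inE mem_filter msk_in_allseqs card_msk andbT; congr (_ && _).
apply/forallP/allP => [H i | H x].
  rewrite mem_iota add0n => /andP[_ lti]; apply/allP => j.
  rewrite mem_iota add0n => /andP[_ ltj].
  rewrite -[i]/(val (Ordinal lti)) -[j]/(val (Ordinal ltj)) !nth_msk.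
  by apply/implyP => /(implyP (H _)) /forallP /(_ (Ordinal ltj)).
apply/implyP => xB; apply/forallP => y; apply/implyP => yB.
have := H x; rewrite mem_iota ltn_ord => /(_ isT) /allP /(_ y).
by rewrite mem_iota ltn_ord !nth_msk xB yB => /(_ isT).
Qed.

Lemma Kstar_bases B : (B \in bases Kstar) = (msk B \in Kstar_table).
Proof.
have negbsK : involutive (map negb).
  by move=> s; rewrite -map_comp map_id_in // => b _ /=; rewrite negbK.
rewrite -[msk B]negbsK (mem_map (inv_inj negbsK)) -msk_setC -K_bases.
apply/imsetP/idP => [[B' B'K ->]|BK]; first by rewrite setTD setCK.
by exists (~: B); rewrite // setTD setCK.
Qed.

Lemma U25_excluded : excluded_minorb 4 U25_table. Proof. by vm_compute. Qed.
Lemma U35_excluded : excluded_minorb 4 U35_table. Proof. by vm_compute. Qed.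
Lemma K_excluded : excluded_minorb 6 K_table. Proof. by vm_compute. Qed.
Lemma Kstar_excluded : excluded_minorb 6 Kstar_table. Proof. by vm_compute. Qed.

Theorem lemma2p10 :
  [/\ excluded_minor_R U25, excluded_minor_R U35,
      excluded_minor_R K & excluded_minor_R Kstar].
Proof.
split.
- exact: (excluded_minorb_sound (M := U25) (erefl _) U25_bases U25_excluded).
- exact: (excluded_minorb_sound (M := U35) (erefl _) U35_bases U35_excluded).
- exact: (excluded_minorb_sound (M := K) (erefl _) K_bases K_excluded).
- exact: (excluded_minorb_sound (M := Kstar) (erefl _) Kstar_bases Kstar_excluded).
Qed.
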